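(* Let $\mathfrak p\in\mathcal P$, $\mathfrak P\in\mathfrak p^{\uparrow}$, let $\mathfrak a$ be a left ideal of $A$ and $f:\mathfrak a\to E(U_{\mathfrak P})$ an $A$-homomorphism. If $f\neq0$, then $\operatorname{Ker}f\cap R\subseteq\mathfrak p$.
   Context: Rings are unital. A commutative ring $R$ is pseudo-noetherian if for every $a\in R$ the set of prime ideals minimal among those containing $a$ is finite, and for every such minimal prime $\mathfrak p$ the ring $R_{\mathfrak p}$ is noetherian. Throughout, $R$ is a reduced pseudo-noetherian ring with total ring of fractions $Q$. An $R$-algebra $A$ is pseudo-noetherian if $A_{\mathfrak p}$ is noetherian for every prime $\mathfrak p$ of $R$ of height $\le 1$; a pseudo-noetherian order is a pseudo-noetherian $R$-algebra with no nonzero nilpotent ideals which is torsion free as an $R$-module (so $A\subseteq QA=Q\otimes_RA$). $\mathcal P$ denotes the set of prime ideals of $R$ of height $1$. For a torsion free $R$-module $M$ put $M_{\mathcal P}=\{x\in QM:\ \forall\,\mathfrak p\in\mathcal P\ \exists\, r\in R\setminus\mathfrak p,\ rx\in M\}$; $M$ is divisorial if $M_{\mathcal P}=M$. A pseudo-krullian order is a pseudo-noetherian order that is divisorial as an $R$-module. Throughout, $A$ is a pseudo-krullian order over $R$ such that $A_{\mathfrak p}$ is a finitely generated $R_{\mathfrak p}$-module for every $\mathfrak p\in\mathcal P$. For $\mathfrak p\in\mathcal P$, $\mathfrak p^{\uparrow}$ is the (nonempty, finite) set of prime ideals $\mathfrak P$ of $A$ with $\mathfrak P\cap R=\mathfrak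 p$. For $\mathfrak P\in\mathfrak p^\uparrow$, $U_{\mathfrak P}$ denotes the unique (up to isomorphism) simple $A_{\mathfrak p}$-module with $\operatorname{ann}_AU_{\mathfrak P}=\mathfrak P$. $E(M)$ denotes the injective envelope. *)

From HB Require Import structures.
From mathcomp Require Import all_boot all_order all_algebra.
Set Implicit Arguments. Unset Strict Implicit. Unset Printing Implicit Defensive.
Import GRing.Theory.
Local Open Scope ring_scope.

Definition ideal (R : comPzRingType) (I : R -> Prop) :=
  I 0 /\ (forall x y, I x -> I y -> I (x + y)) /\ (forall a x, I x -> I (a * x)).

Definition prime_ideal (R : comPzRingType) (p : R -> Prop) :=
  ideal p /\ ~ p 1 /\ (forall a b, p (a * b) -> p a \/ p b).

Definition proper_subset (T : Type) (I J : T -> Prop) :=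
  (forall x, I x -> J x) /\ exists x, J x /\ ~ I x.

Definition height_ge (R : comPzRingType) (p : R -> Prop) (n : nat) :=
  exists c : nat -> R -> Prop,
    (forall i, (i <= n)%N -> prime_ideal (c i)) /\
    (forall i, (i < n)%N -> proper_subset (c i) (c i.+1)) /\
    (forall x, c n x <-> p x).

Definition height_le1 (R : comPzRingType) (p : R -> Prop) :=
  prime_ideal p /\ ~ height_ge p 2.

(* p \in \mathcal P : prime of height exactly 1 *)
Definition height_one (R : comPzRingType) (p : R -> Prop) :=
  prime_ideal p /\ height_ge p 1 /\ ~ height_ge p 2.

Definition regular (R : comPzRingType) (r : R) := forall x, r * x = 0 -> x = 0.

Definition reduced (R : comPzRingType) := forall (x : R) n, x ^+ n.+1 = 0 -> x = 0.

Definition minimal_prime_over (R : comPzRingType) (a : R) (q : R -> Prop) :=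
  prime_ideal q /\ q a /\
  forall q', prime_ideal q' -> q' a -> (forall x, q' x -> q x) -> forall x, q x -> q' x.

Definition noetherian_comm (S : comPzRingType) :=
  forall I : nat -> S -> Prop, (forall n, ideal (I n)) ->
    (forall n x, I n x -> I n.+1 x) ->
    exists n, forall m x, (n <= m)%N -> I m x -> I n x.

Definition is_ring_hom (R S : pzRingType) (f : R -> S) :=
  f 1 = 1 /\ (forall x y, f (x + y) = f x + f y) /\ (forall x y, f (x * y) = f x * f y).

(* phi : R -> S is a localization of R at the prime p, i.e. S = R_p
   (standard characterization, Atiyah-Macdonald 3.1-3.2). *)
Definition is_localization_at (R : comPzRingType) (p : R -> Prop)
    (S : comPzRingType) (phi : R -> S) :=
  is_ring_hom phi /\
  (forall s, ~ p s -> exists t, phi s * t = 1) /\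
  (forall y, exists a s, ~ p s /\ phi s * y = phi a) /\
  (forall a, phi a = 0 <-> exists s, ~ p s /\ s * a = 0).

(* psi : A -> B is the localization A_p = R_p (x)_R A of the R-algebra A,
   as an R_p-algebra, where phi : R -> S = R_p. *)
Definition is_alg_localization (R : comPzRingType) (p : R -> Prop)
    (A : algType R) (S : comPzRingType) (phi : R -> S) (B : algType S) (psi : A -> B) :=
  is_localization_at p phi /\ is_ring_hom psi /\
  (forall r a, psi (r *: a) = phi r *: psi a) /\
  (forall b, exists a s, ~ p s /\ phi s *: b = psi a) /\
  (forall a, psi a = 0 <-> exists s, ~ p s /\ s *: a = 0).

Definition pseudo_noetherian_ring (R : comPzRingType) :=
  forall a : R,
    (exists n (qs : nat -> R -> Prop), forall q, minimal_prime_over a q ->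
        exists i, (i < n)%N /\ forall x, q x <-> qs i x) /\
    (forall q, minimal_prime_over a q ->
       forall (S : comPzRingType) (phi : R -> S), is_localization_at q phi -> noetherian_comm S).

Definition left_ideal (A : pzRingType) (I : A -> Prop) :=
  I 0 /\ (forall x y, I x -> I y -> I (x + y)) /\ (forall a x, I x -> I (a * x)).

Definition right_ideal (A : pzRingType) (I : A -> Prop) :=
  I 0 /\ (forall x y, I x -> I y -> I (x + y)) /\ (forall a x, I x -> I (x * a)).

Definition two_sided_ideal (A : pzRingType) (I : A -> Prop) :=
  left_ideal I /\ right_ideal I.

Definition prime_ideal_nc (A : pzRingType) (P : A -> Prop) :=
  two_sided_ideal P /\ ~ P 1 /\
  forall I J, two_sided_ideal I -> two_sided_ideal J ->
    (forall x y, I x -> J y -> P (x * y)) ->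
    (forall x, I x -> P x) \/ (forall x, J x -> P x).

Definition noetherian_ring (A : pzRingType) :=
  (forall I : nat -> A -> Prop, (forall n, left_ideal (I n)) ->
    (forall n x, I n x -> I n.+1 x) ->
    exists n, forall m x, (n <= m)%N -> I m x -> I n x) /\
  (forall I : nat -> A -> Prop, (forall n, right_ideal (I n)) ->
    (forall n x, I n x -> I n.+1 x) ->
    exists n, forall m x, (n <= m)%N -> I m x -> I n x).

(* I is nilpotent: I^(n+1) = 0 for some n *)
Definition no_nonzero_nilpotent_ideals (A : pzRingType) :=
  forall I : A -> Prop, two_sided_ideal I ->
    forall n, (forall xs : seq A, size xs = n.+1 -> (forall x, x \in xs -> I x) ->
                 \prod_(x <- xs) x = 0) ->
    forall x, I x -> x = 0.

Definition fg_over (S : comPzRingType) (B : algType S) :=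
  exists n (bs : nat -> B), forall b, exists cs : nat -> S,
    b = \sum_(i < n) cs i *: bs i.

Definition pseudo_noetherian_alg (R : comPzRingType) (A : algType R) :=
  forall p : R -> Prop, height_le1 p ->
    forall (S : comPzRingType) (phi : R -> S) (B : algType S) (psi : A -> B),
      is_alg_localization p phi psi -> noetherian_ring B.

Definition torsion_free (R : comPzRingType) (A : algType R) :=
  forall (r : R) (a : A), regular r -> r *: a = 0 -> a = 0.

Definition pseudo_noetherian_order (R : comPzRingType) (A : algType R) :=
  pseudo_noetherian_alg A /\ no_nonzero_nilpotent_ideals A /\ torsion_free A.

(* A_{\mathcal P} = A, with QA written out for torsion free A: an element of
   QA is a/s (s regular), r (a/s) \in A iff r a = s b for some b \in A, and
   a/s \in A iff a = s c for some c \in A. *)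
Definition divisorial_alg (R : comPzRingType) (A : algType R) :=
  forall (a : A) (s : R), regular s ->
    (forall p, height_one p -> exists (r : R) (b : A), ~ p r /\ r *: a = s *: b) ->
    exists c : A, a = s *: c.

Definition pseudo_krullian_order (R : comPzRingType) (A : algType R) :=
  pseudo_noetherian_order A /\ divisorial_alg A.

Definition is_hom (A : pzRingType) (M N : lmodType A) (f : M -> N) :=
  (forall x y, f (x + y) = f x + f y) /\ (forall a x, f (a *: x) = a *: f x).

Definition submodule (A : pzRingType) (M : lmodType A) (N : M -> Prop) :=
  N 0 /\ (forall x y, N x -> N y -> N (x + y)) /\ (forall a x, N x -> N (a *: x)).

Definition simple_module (A : pzRingType) (M : lmodType A) :=
  (exists x : M, x <> 0) /\
  forall N : M -> Prop, submodule N -> (forall x, N x -> x = 0) \/ (forall x, N x).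

Definition injective_module (A : pzRingType) (E : lmodType A) :=
  forall (M N : lmodType A) (g : M -> N) (h : M -> E),
    is_hom g -> injective g -> is_hom h ->
    exists k : N -> E, is_hom k /\ forall x, k (g x) = h x.

(* iota : U -> E is an injective envelope of U (a B-module, viewed as an
   A-module by restriction of scalars along psi : A -> B), as A-modules. *)
Definition injective_envelope_via (A B : pzRingType) (psi : A -> B)
    (U : lmodType B) (E : lmodType A) (iota : U -> E) :=
  (forall x y, iota (x + y) = iota x + iota y) /\
  (forall a u, iota (psi a *: u) = a *: iota u) /\
  injective iota /\ injective_module E /\
  (forall N : E -> Prop, submodule N -> (exists x, N x /\ x <> 0) ->
     exists u, u <> 0 /\ N (iota u)).

From mathcomp Require Import all_boot all_order all_algebra.
From Stdlib Require Import Classical.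
Set Implicit Arguments.
Unset Strict Implicit.
Import GRing.Theory.
Local Open Scope ring_scope.

(* If [r] were outside [p], then [r] would act invertibly on the localized
   simple module [U].  But [r] is central in [A] and kills [f a] for every [a]
   in the left ideal (as [f (a r) = a f r = 0]), so a nonzero value of [f]
   spans a nonzero [r]-torsion submodule of [E(U)]; by essentiality it meets
   [U], producing a nonzero element of [U] annihilated by [r]. *)

Lemma scalar_alg_comm (R : comPzRingType) (A : algType R) (r : R) (a : A) :
  GRing.comm r%:A a.
Proof. by rewrite /GRing.comm mulr_algl mulr_algr. Qed.

Lemma annihilator_submodule (A : pzRingType) (M : lmodType A) (c : A) :
  (forall a, GRing.comm c a) -> submodule (fun m : M => c *: m = 0).
Proof.
move=> c_central; split; first exact: scaler0.
split=> [m n cm0 cn0 | a m cm0]; first by rewrite scalerDr cm0 cn0 addr0.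
by rewrite scalerA c_central -scalerA cm0 scaler0.
Qed.

Lemma left_ideal_hom_central_kernel (A : pzRingType) (M : lmodType A)
    (aa : A -> Prop) (f : A -> M) (c x : A) :
  (forall a y, aa y -> f (a * y) = a *: f y) ->
  (forall a, GRing.comm c a) -> aa c -> f c = 0 -> aa x -> c *: f x = 0.
Proof.
move=> f_lin c_central aa_c fc0 aa_x.
by rewrite -f_lin // c_central f_lin // fc0 scaler0.
Qed.

Lemma additive_map0 (M N : zmodType) (g : M -> N) :
  (forall x y, g (x + y) = g x + g y) -> g 0 = 0.
Proof. by move=> g_add; apply: (addrI (g 0)); rewrite -g_add !addr0. Qed.

Lemma injective_envelope_annihilator (A B : pzRingType) (psi : A -> B)
    (U : lmodType B) (E : lmodType A) (iota : U -> E) (c : A) (e : E) :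
  injective_envelope_via psi iota -> (forall a, GRing.comm c a) ->
  c *: e = 0 -> e <> 0 -> exists u : U, u <> 0 /\ psi c *: u = 0.
Proof.
move=> [iota_add [iota_lin [iota_inj [_ iota_ess]]]] c_central ce0 e_neq0.
have [u [u_neq0 cu0]] := iota_ess _ (annihilator_submodule E c_central)
  (ex_intro _ e (conj ce0 e_neq0)).
exists u; split=> //; apply: iota_inj.
by rewrite iota_lin cu0 additive_map0.
Qed.

Lemma alg_localization_scalar_regular (R : comPzRingType) (p : R -> Prop)
    (A : algType R) (S : comPzRingType) (phi : R -> S) (B : algType S)
    (psi : A -> B) (U : lmodType B) (r : R) (u : U) :
  is_alg_localization p phi psi -> ~ p r -> psi r%:A *: u = 0 -> u = 0.
Proof.
move=> [[_ [phi_unit _]] [[psi1 _] [psiZ _]]] r_notin_p.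
have [t phi_rt] := phi_unit r r_notin_p.
rewrite psiZ psi1 => ru0.
have -> : u = (t *: 1 * (phi r *: 1)) *: u.
  by rewrite -scalerAl mul1r scalerA mulrC phi_rt !scale1r.
by rewrite -scalerA ru0 scaler0.
Qed.

Theorem lemma2p2 (R : comPzRingType) (A : algType R)
  (HRred : reduced R) (HRpn : pseudo_noetherian_ring R)
  (HA : pseudo_krullian_order A)
  (HAfg : forall p : R -> Prop, height_one p ->
     forall (S : comPzRingType) (phi : R -> S) (B : algType S) (psi : A -> B),
       is_alg_localization p phi psi -> fg_over B)
  (p : R -> Prop) (hp : height_one p)
  (P : A -> Prop) (HP : prime_ideal_nc P) (HPR : forall r : R, P (r%:A) <-> p r)
  (S : comPzRingType) (phi : R -> S) (B : algType S) (psi : A -> B)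
  (Hloc : is_alg_localization p phi psi)
  (U : lmodType B) (HU : simple_module U)
  (HannU : forall a : A, P a <-> forall u : U, psi a *: u = 0)
  (E : lmodType A) (iota : U -> E) (Henv : injective_envelope_via psi iota)
  (aa : A -> Prop) (Haa : left_ideal aa) (f : A -> E)
  (Hfadd : forall x y, aa x -> aa y -> f (x + y) = f x + f y)
  (Hflin : forall a x, aa x -> f (a * x) = a *: f x)
  (Hf0 : exists x, aa x /\ f x <> 0) :
  forall r : R, aa (r%:A) -> f (r%:A) = 0 -> p r.
Proof.
move=> r aa_r fr0; apply: NNPP => r_notin_p.
have [x [aa_x fx_neq0]] := Hf0.
have r_central := @scalar_alg_comm R A r.
have rfx0 := left_ideal_hom_central_kernel Hflin r_central aa_r fr0 aa_x.
have [u [u_neq0 ru0]] :=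
  injective_envelope_annihilator Henv r_central rfx0 fx_neq0.
exact/u_neq0/(alg_localization_scalar_regular Hloc r_notin_p ru0).
Qed.
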